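(* Let $\ell\ge1$, $n\ge1$, ${\mathbf y}_1,\dots,{\mathbf y}_n\in\mathbb{F}_2^\ell$, and let $M=[P_{{\mathbf y}_1}\ P_{{\mathbf y}_2}\ \cdots\ P_{{\mathbf y}_n}]$ be the $2^\ell\times n2^\ell$ binary matrix formed by $n$ dyadic permutation matrices side by side. Then the Tanner graph of $M$ is acyclic, and it has exactly $2^\ell(2^{n-1}-1)$ absorbing sets whose induced subgraphs are connected; each of them is an $(a,0)$-absorbing set with $a$ even and $2\le a\le n$.
   Context: For ${\mathbf a}\in\mathbb{F}_2^\ell$, $P_{\mathbf a}$ is the $2^\ell\times2^\ell$ binary matrix with $(P_{\mathbf a})_{{\mathbf x},{\mathbf y}}=1$ iff ${\mathbf y}={\mathbf x}+{\mathbf a}$ (rows/columns indexed by $\mathbb{F}_2^\ell$). The Tanner graph of a binary matrix is the bipartite graph with check nodes = rows, variable nodes = columns, edges at the $1$-entries. For a nonempty set $\mathcal{A}$ of variable nodes, let $G_{\mathcal{A}\cup\mathcal{N}(\mathcal{A})}$ be the subgraph induced by $\mathcal{A}$ and its neighborhood $\mathcal{N}(\mathcal{A})$. $\mathcal{A}$ is an $(a,b)$-absorbing set if $|\mathcal{A}|=a$, the induced subgraph has exactly $b$ check nodes of odd degree, and every $v\in\mathcal{A}$ has strictly more neighbors of even degree than of odd degree in the induced subgraph. Only absorbing sets whose induced subgraph is connected are counted. *)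

From mathcomp Require Import all_boot all_order all_algebra.
Set Implicit Arguments. Unset Strict Implicit. Unset Printing Implicit Defensive.
Import GRing.Theory.
Local Open Scope ring_scope.

Definition bmatrix (R C : finType) := R -> C -> bool.

Definition dyadic_perm (l : nat) (a : 'rV['F_2]_l) : bmatrix 'rV['F_2]_l 'rV['F_2]_l :=
  fun x y => y == x + a.

(* M = [P_{y_1} ... P_{y_n}]: column (j, y) is column y of block j. *)
Definition dyadic_concat (l n : nat) (ys : 'I_n -> 'rV['F_2]_l)
  : bmatrix 'rV['F_2]_l ('I_n * 'rV['F_2]_l)%type :=
  fun x jc => dyadic_perm (ys jc.1) x jc.2.

Section Tanner.
Variables (R C : finType) (H : bmatrix R C).

(* Tanner graph: vertices are check nodes (inl r) and variable nodes (inr c);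
   edges at 1-entries. *)
Definition tanner_adj : rel (R + C) :=
  fun u w => match u, w with
             | inl r, inr c => H r c
             | inr c, inl r => H r c
             | _, _ => false
             end.

Definition tanner_acyclic : Prop :=
  forall s : seq (R + C), ~ (ucycle tanner_adj s /\ 3 <= size s)%N.

Definition nbhd (A : {set C}) : {set R} := [set r | [exists c in A, H r c]].

Definition ind_deg (A : {set C}) (r : R) : nat := #|[set c in A | H r c]|.

Definition odd_checks (A : {set C}) : {set R} :=
  [set r in nbhd A | odd (ind_deg A r)].

Definition even_checks (A : {set C}) : {set R} :=
  [set r in nbhd A | ~~ odd (ind_deg A r)].

Definition absorbing_set (a b : nat) (A : {set C}) : bool :=
  [&& A != set0, #|A| == a, #|odd_checks A| == b &
      [forall v in A,
        (#|[set r in odd_checks A | H r v]| < #|[set r in even_checks A | H r v]|)%N]].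

(* A is an absorbing set (for some (a,b)); a and b are necessarily
   #|A| and the number of odd checks. *)
Definition is_absorbing (A : {set C}) : bool :=
  absorbing_set #|A| #|odd_checks A| A.

Definition ind_vertices (A : {set C}) : {set R + C} :=
  [set u | match u with inl r => r \in nbhd A | inr c => c \in A end].

Definition ind_connected (A : {set C}) : bool :=
  [forall u in ind_vertices A, forall w in ind_vertices A,
    connect (fun x y => [&& x \in ind_vertices A, y \in ind_vertices A
                         & tanner_adj x y]) u w].

End Tanner.

From mathcomp Require Import all_boot all_order all_algebra.
Set Implicit Arguments. Unset Strict Implicit. Unset Printing Implicit Defensive.
Import GRing.Theory.

(* Column (j, y) of [P_y1 ... P_yn] has weight one: its only check is
   y + y_j.  So the Tanner graph is a disjoint union of stars, one centred at
   each check x, whose leaves are the variables (j, x + y_j), one per block.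
   A star forest is acyclic, and a connected induced subgraph lies in a single
   star.  There every variable has the single neighbour x, so the absorbing
   condition says exactly that x has even degree: the connected absorbing sets
   are the nonempty even sets of blocks, for each of the 2^l checks. *)

Lemma tanner_adjC (R C : finType) (H : bmatrix R C) : symmetric (tanner_adj H).
Proof. by case=> [r|c] [r'|c']. Qed.

Section WeightOneColumns.
Variables (R C : finType) (f : C -> R) (H : bmatrix R C).
Hypothesis H_col : forall r c, H r c = (r == f c).

Lemma tanner_adj_var c u : tanner_adj H (inr c) u = (u == inl (f c)).
Proof. by case: u => [r|c'] //=; rewrite H_col. Qed.

Lemma tanner_acyclic_weight_one : tanner_acyclic H.
Proof.
move=> s [/andP[cyc uniq_s] size_s]; set e := tanner_adj H in cyc.
have [c s_c] : exists c, inr c \in s.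
  case: s {uniq_s} cyc size_s => [|[r|c] [|[r'|c'] t]] //= /andP[] // _ _.
    by exists c'; rewrite !inE eqxx orbT.
  by exists c; rewrite inE eqxx.
have [i t s_rot] := rot_to s_c.
have := rot_uniq i s; have := rot_cycle i e s; have := size_rot i s.
rewrite s_rot uniq_s cyc => size_t cyc_t uniq_t; move: size_s; rewrite -size_t.
case: t {s_rot size_t} cyc_t uniq_t => [|a [|b u]] //.
(* Both cycle neighbours of the variable [inr c] must be its unique check. *)
rewrite /cycle rcons_path => /andP[/andP[e_ca _]].
rewrite /e tanner_adj_var in e_ca.
rewrite /e tanner_adjC tanner_adj_var /= => /eqP last_a /and3P[_ a_notin _].
by move: a_notin; rewrite (eqP e_ca) -last_a mem_last.
Qed.

Definition fiber x : {set C} := [set c | f c == x].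

Section Star.
Variables (x : R) (A : {set C}).
Hypotheses (A_fiber : A \subset fiber x) (A_neq0 : A != set0).

Lemma fiber_var c : c \in A -> f c = x.
Proof. by move/(subsetP A_fiber); rewrite inE => /eqP. Qed.

Lemma nbhd_fiber : nbhd H A = [set x].
Proof.
apply/setP => r; rewrite !inE; apply/existsP/eqP => [[c /andP[cA]]|->].
  by rewrite H_col fiber_var // => /eqP.
by case/set0Pn: A_neq0 => c cA; exists c; rewrite cA H_col fiber_var // eqxx.
Qed.

Lemma ind_deg_fiber : ind_deg H A x = #|A|.
Proof.
apply: eq_card => c; rewrite inE H_col.
by case cA: (c \in A); rewrite //= fiber_var // eqxx.
Qed.

Lemma odd_checks_fiber : odd_checks H A = if odd #|A| then [set x] else set0.
Proof.
apply/setP => r; rewrite /odd_checks inE nbhd_fiber inE.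
have [->|nrx] := eqVneq r x; last by case: ifP; rewrite inE ?(negbTE nrx).
by rewrite ind_deg_fiber; case: ifP; rewrite inE ?eqxx.
Qed.

Lemma even_checks_fiber : even_checks H A = if odd #|A| then set0 else [set x].
Proof.
apply/setP => r; rewrite /even_checks inE nbhd_fiber inE.
have [->|nrx] := eqVneq r x; last by case: ifP; rewrite inE ?(negbTE nrx).
by rewrite ind_deg_fiber; case: ifP; rewrite inE ?eqxx.
Qed.

Lemma checks_at_var (S : {set R}) v :
  v \in A -> S \subset [set x] -> [set r in S | H r v] = S.
Proof.
move=> vA /subsetP Sx; apply/setP => r; rewrite inE H_col fiber_var //.
by case rS: (r \in S); rewrite // -(set1P (Sx r rS)) eqxx.
Qed.

Lemma is_absorbing_fiber : is_absorbing H A = ~~ odd #|A|.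
Proof.
rewrite /is_absorbing /absorbing_set A_neq0 !eqxx /=.
have odd_x : odd_checks H A \subset [set x].
  by rewrite odd_checks_fiber; case: ifP; rewrite ?sub0set.
have even_x : even_checks H A \subset [set x].
  by rewrite even_checks_fiber; case: ifP; rewrite ?sub0set.
have /set0Pn[c cA] := A_neq0.
apply/forall_inP/idP => [/(_ c cA)|A_even v vA];
  rewrite !checks_at_var // odd_checks_fiber even_checks_fiber.
  by case: (odd _); rewrite ?cards1 ?cards0.
by rewrite (negbTE A_even) cards0 cards1.
Qed.

Lemma ind_connected_fiber : ind_connected H A.
Proof.
set V := ind_vertices H A.
pose e u w := [&& u \in V, w \in V & tanner_adj H u w].
have xV : inl x \in V by rewrite inE /= nbhd_fiber inE.
have to_x u : u \in V -> connect e u (inl x).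
  case: u => [r|c]; rewrite inE /=.
    by rewrite nbhd_fiber => /set1P ->.
  move=> cA; apply: connect1; rewrite /e xV inE cA /= H_col fiber_var //.
have e_sym : symmetric e by move=> u w; rewrite /e tanner_adjC andbCA.
have from_x u : u \in V -> connect e (inl x) u.
  by move=> uV; rewrite sym_connect_sym ?to_x.
apply/forall_inP => u uV; apply/forall_inP => w wV.
exact: connect_trans (to_x u uV) (from_x w wV).
Qed.

End Star.

Lemma ind_connected_sub_fiber A c :
  ind_connected H A -> c \in A -> A \subset fiber (f c).
Proof.
move=> /forall_inP conn cA; apply/subsetP => c' c'A; rewrite inE.
have cV : inr c \in ind_vertices H A by rewrite inE.
have c'V : inr c' \in ind_vertices H A by rewrite inE.
pose star_fc (u : R + C) := if u is inl r then r == f c else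
                             if u is inr d then f d == f c else false.
have star_closed : closed (fun u w => [&& u \in ind_vertices H A,
                     w \in ind_vertices H A & tanner_adj H u w]) star_fc.
  by move=> [r|d] [r'|d'] /and3P[_ _] //=; rewrite H_col => /eqP ->.
have := closed_connect star_closed (forall_inP (conn _ cV) _ c'V).
by rewrite !unfold_in /= eqxx => <-.
Qed.

Lemma absorbing_connectedP A :
  is_absorbing H A && ind_connected H A =
  [exists x, [&& A \subset fiber x, A != set0 & ~~ odd #|A|]].
Proof.
apply/andP/existsP => [[abs conn]|[x /and3P[Ax A0 A_even]]]; last first.
  by rewrite (is_absorbing_fiber Ax A0) (ind_connected_fiber Ax A0).
have A0 : A != set0 by case/and4P: abs.
have /set0Pn[c cA] := A0.
have Ac := ind_connected_sub_fiber conn cA.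
by exists (f c); rewrite Ac A0 -(is_absorbing_fiber Ac A0).
Qed.

End WeightOneColumns.

Lemma card_even_sets (T : finType) :
  (0 < #|T|)%N -> #|[set B : {set T} | ~~ odd #|B|]| = 2 ^ #|T|.-1.
Proof.
move=> T_gt0; case/card_gt0P: (T_gt0) => t0 _; set E := [set B | _].
pose toggle (B : {set T}) := if t0 \in B then B :\ t0 else t0 |: B.
have toggleK : involutive toggle.
  move=> B; rewrite /toggle; have [t0B|t0B] := boolP (t0 \in B).
    by rewrite setD11 setD1K.
  by rewrite setU11 setU1K.
have odd_toggle B : odd #|toggle B| = ~~ odd #|B|.
  rewrite /toggle; case: ifP => t0B; last by rewrite cardsU1 t0B.
  by rewrite [in RHS](cardsD1 t0 B) t0B negbK.
have toggle_E : toggle @: E = ~: E.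
  apply/setP => B; rewrite -{1}(toggleK B) mem_imset; last exact: can_inj toggleK.
  by rewrite !inE odd_toggle.
have := cardsC E; rewrite -toggle_E card_imset; last exact: can_inj toggleK.
rewrite -cardsT -powersetT card_powerset cardsT addnn -mul2n.
by rewrite -(prednK T_gt0) expnS => /eqP; rewrite eqn_pmul2l // => /eqP.
Qed.

Lemma addrK_F2mx m k (A B : 'M['F_2]_(m, k)) : (A + B + B = A)%R.
Proof. by apply/matrixP => i j; rewrite -addrA !mxE addrr_pchar2 ?pchar_Fp // addr0. Qed.

Section DyadicConcat.
Variables (l n : nat) (ys : 'I_n -> 'rV['F_2]_l).
Local Notation var := ('I_n * 'rV['F_2]_l)%type.

Definition var_check (c : var) : 'rV['F_2]_l := (c.2 + ys c.1)%R.

Definition star_vars (x : 'rV['F_2]_l) (B : {set 'I_n}) : {set var} :=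
  [set (j, x + ys j)%R | j in B].

Lemma dyadic_concatE x c : dyadic_concat ys x c = (x == var_check c).
Proof.
by rewrite /dyadic_concat /dyadic_perm /var_check; apply/eqP/eqP => ->;
  rewrite addrK_F2mx.
Qed.

Lemma var_checkK j x : var_check (j, x + ys j)%R = x.
Proof. exact: addrK_F2mx. Qed.

Lemma mem_star_vars x B j : ((j, x + ys j)%R \in star_vars x B) = (j \in B).
Proof. by rewrite mem_imset // => j1 j2 []. Qed.

Lemma card_star_vars x B : #|star_vars x B| = #|B|.
Proof. by rewrite card_imset // => j1 j2 []. Qed.

Lemma star_vars_sub_fiber x B : star_vars x B \subset fiber var_check x.
Proof. by apply/subsetP => _ /imsetP[j _ ->]; rewrite inE var_checkK. Qed.

Lemma sub_fiber_star_vars x (A : {set var}) :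
  A \subset fiber var_check x -> A = star_vars x [set j | (j, x + ys j)%R \in A].
Proof.
move/subsetP => Ax; apply/setP => -[j y]; apply/idP/imsetP => [jyA|[j' + [-> ->]]].
  move: (Ax _ jyA); rewrite inE => /eqP <-.
  by exists j; rewrite ?inE /var_check /= addrK_F2mx.
by rewrite inE.
Qed.

Lemma star_vars_inj x x' B B' :
  B != set0 -> star_vars x B = star_vars x' B' -> x = x' /\ B = B'.
Proof.
case/set0Pn => j jB eqB.
have jx' : (j, x + ys j)%R \in star_vars x' B' by rewrite -eqB mem_star_vars.
have x_x' : x = x'.
  by move: jx' => /(subsetP (star_vars_sub_fiber _ _)); rewrite inE var_checkK => /eqP.
subst x'; split=> //; apply/setP => k.
by rewrite -(mem_star_vars x) eqB mem_star_vars.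
Qed.

Local Notation M := (dyadic_concat ys).

Lemma connected_absorbing_setsE :
  [set A | is_absorbing M A && ind_connected M A] =
  star_vars @2: ([set: 'rV['F_2]_l], [set B | (B != set0) && ~~ odd #|B|]).
Proof.
apply/setP => A; rewrite inE (absorbing_connectedP dyadic_concatE).
apply/existsP/imset2P => [[x /and3P[Ax A0 A_even]]|[x B _ + ->]].
  exists x [set j | (j, x + ys j)%R \in A]; rewrite ?inE //.
    by rewrite -card_gt0 -(card_star_vars x) -sub_fiber_star_vars // card_gt0 A0.
  exact: sub_fiber_star_vars.
rewrite inE => /andP[B0 B_even]; exists x.
by rewrite star_vars_sub_fiber card_star_vars B_even -card_gt0 card_star_vars card_gt0 B0.
Qed.

Lemma card_connected_absorbing_sets : (0 < n)%N ->
  #|[set A | is_absorbing M A && ind_connected M A]| = (2 ^ l * (2 ^ n.-1 - 1))%N.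
Proof.
move=> n_gt0; rewrite connected_absorbing_setsE curry_imset2X card_in_imset.
  rewrite cardsX cardsT card_mx card_Fp // mul1n.
  have := cardsD1 set0 [set B : {set 'I_n} | ~~ odd #|B|].
  rewrite inE cards0 card_even_sets card_ord // add1n => ->; rewrite subn1 /=.
  by congr (_ * _)%N; apply: eq_card => B; rewrite !inE.
by move=> [x B] [x' B']; rewrite !inE /= => /andP[B0 _] _ /(star_vars_inj B0) [-> ->].
Qed.

End DyadicConcat.

Theorem mainTheorem8 (l n : nat) (hl : (1 <= l)%N) (hn : (1 <= n)%N)
    (ys : 'I_n -> 'rV['F_2]_l) :
  let M := dyadic_concat ys in
  tanner_acyclic M /\
  #|[set A : {set ('I_n * 'rV['F_2]_l)%type} |
      is_absorbing M A && ind_connected M A]| = (2 ^ l * (2 ^ n.-1 - 1))%N /\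
  (forall A : {set ('I_n * 'rV['F_2]_l)%type},
     is_absorbing M A -> ind_connected M A ->
     absorbing_set M #|A| 0 A /\ ~~ odd #|A| /\ (2 <= #|A| <= n)%N).
Proof.
move=> M; have M_col := dyadic_concatE ys.
split; first exact: tanner_acyclic_weight_one M_col.
split; first exact: card_connected_absorbing_sets.
move=> A abs conn.
have := absorbing_connectedP M_col A.
rewrite abs conn => /esym/existsP[x /and3P[Ax A0 A_even]].
have odd0 : odd_checks M A = set0.
  by rewrite (odd_checks_fiber M_col Ax A0) (negbTE A_even).
split; first by move: abs; rewrite /is_absorbing odd0 cards0.
split=> //; apply/andP; split.
  by move: A0 A_even; rewrite -card_gt0; case: #|A| => [|[|k]].
by rewrite (sub_fiber_star_vars Ax) card_star_vars -[X in (_ <= X)%N]card_ord max_card.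
Qed.
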